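(* Let $a>0$ and $n,k$ be integers with $1\le k\le n/2$, and let $a_0,\dots,a_n$ be integers. Say a prime $p$ satisfies (C) if $p\mid\prod_{i=1}^k(a+n-k+i)$ and $p\nmid a_0a_n$. (i) If there is a prime $p>a+k$ satisfying (C), then $f_{n,a}(x)$ has no factor of degree $k$ in $\mathbb{Q}[x]$. (ii) Let $p\ge k+2$ be a prime satisfying (C). Put $r_p=\lfloor k/2\rfloor$ if $p<2k$ and $r_p=p-1$ if $p\ge 2k$, and $\mathcal{A}_p=\bigcup_{i=1}^{r_p}\big([ip-k,\,ip-1]\cap\mathbb{Z}_{>0}\big)\cup\{j\in\mathbb{Z}: j>pr_p\}$. If $a\notin\mathcal{A}_p$, then $f_{n,a}(x)$ has no factor of degree $k$ in $\mathbb{Q}[x]$. (iii) Let $P_1>P_2>\cdots>P_s\ge k+2$ be primes satisfying (C), and let $\{Q_1,\dots,Q_g\}\subseteq\{P_1,\dots,P_s\}$. Put $\mathcal{B}\{Q_1,\dots,Q_g\}=\bigcap_{l=1}^{g}\mathcal{A}_{Q_l}$ with $\mathcal{A}_{Q_l}$ as in (ii). If $a\notin\mathcal{B}\{Q_1,\dots,Q_g\}$, then $f_{n,a}(x)$ has no factor of degree $k$ in $\mathbb{Q}[x]$.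
   Context: Here $a$ is an integer. For integers $n\ge 1$, $a\ge 0$ and integers $a_0,\dots,a_n$, $f_{n,a}(x)=\sum_{j=0}^{n} a_j\frac{x^j}{(j+a)!}$. *)

From HB Require Import structures.
From mathcomp Require Import all_boot all_order all_algebra.
Set Implicit Arguments. Unset Strict Implicit. Unset Printing Implicit Defensive.
Import Order.TTheory GRing.Theory Num.Theory.

Definition fna (n a : nat) (c : nat -> int) : {poly rat} :=
  (\sum_(j < n.+1) ((c j)%:~R / ((j + a)`!)%:R) *: 'X^j)%R.

Definition no_factor_of_degree (k : nat) (f : {poly rat}) : Prop :=
  ~ exists g : {poly rat}, size g = k.+1 /\ (g %| f)%R.

Definition condC (n a k : nat) (c : nat -> int) (p : nat) : bool :=
  [&& prime p,
      p %| \prod_(1 <= i < k.+1) (a + n - k + i)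
    & ~~ ((p%:Z %| (c 0%N * c n)%R)%Z)].

Definition r_p (k p : nat) : nat := if p < k.*2 then k./2 else p.-1.

Definition inA (k p a : nat) : bool :=
  has (fun i => (i * p - k <= a) && (a <= i * p - 1)) (iota 1 (r_p k p))
  || (p * r_p k p < a).

Definition inB (k : nat) (Qs : seq nat) (a : nat) : bool :=
  all (fun q => inA k q a) Qs.

(* Clearing denominators, F = (n + a)! f_{n,a} is an integer polynomial whose
   j-th coefficient is a_j (n+a)(n+a-1)...(j+a+1).  When a prime p satisfies
   (C), p divides every coefficient of F of degree <= n - k but neither the
   constant nor the leading coefficient.  A factor of degree k yields, by
   Gauss's lemma, F = G H in Z[x] with deg G = k; then p | G_0 while p does
   not divide G_k.  The first edge of the p-adic Newton polygon of G then
   falls with slope at least 1/k, and pairing its right end with the matching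
   vertex of the Newton polygon of H produces a coefficient F_R, 0 < R <= n,
   with R <= k (v_p(F_0) - v_p(F_R)) <= k v_p((a+R)!/a!).
   Conversely, Legendre's recursion for v_p(N!) shows k v_p((a+R)!/a!) < R
   for every R > 0 when p >= k + 2 and a lies outside A_p.  This is part (ii);
   part (i) is the case p > a + k, which forces a outside A_p, and part (iii)
   applies (ii) to a prime Q_l whose exceptional set misses a. *)

From HB Require Import structures.
From mathcomp Require Import all_boot all_order all_algebra.
From mathcomp Require Import zify ring lra.
Set Implicit Arguments. Unset Strict Implicit. Unset Printing Implicit Defensive.
Import Order.TTheory GRing.Theory Num.Theory.

Section Legendre.

Variable p : nat.
Hypothesis p_prime : prime p.

Lemma logn_fact_rec N : logn p N`! = N %/ p + logn p (N %/ p)`!.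
Proof.
have p_gt0 := prime_gt0 p_prime.
elim: N => [|N IHN]; first by rewrite div0n.
rewrite factS lognM ?fact_gt0 // IHN divnS //.
have [/dvdnP [m eNm] | ndvd] := boolP (p %| N.+1); last first.
  by rewrite logn_coprime ?prime_coprime.
have m_gt0 : 0 < m by case: m eNm.
have -> : N %/ p = m.-1.
  have eN : N = m.-1 * p + p.-1 by nia.
  by rewrite eN divnMDl // divn_small ?addn0 // prednK.
rewrite eNm lognM // (logn_prime p p_prime) eqxx add1n prednK //.
have -> : m`! = m * m.-1`! by case: m m_gt0 {eNm}.
rewrite lognM ?fact_gt0 //; lia.
Qed.

Lemma logn_fact_small N : N < p -> logn p N`! = 0.
Proof. by move=> ltNp; rewrite logn_fact_rec divn_small // fact0 logn1. Qed.

Lemma logn_fact_bound N : p.-1 * logn p N`! <= N.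
Proof.
have p_gt1 := prime_gt1 p_prime.
elim: N {-2}N (leqnn N) => [|B IHB] [|N] leNB; rewrite ?fact0 ?logn1 ?muln0 //.
rewrite logn_fact_rec mulnDr.
have := IHB (N.+1 %/ p) (leq_trans (ltn_Pdiv p_gt1 (ltn0Sn N)) leNB).
have := leq_divM N.+1 p.
move: (N.+1 %/ p) (logn p _) => q v; nia.
Qed.

End Legendre.

Section ExceptionalSet.

Variables k p : nat.
Hypotheses (k_gt0 : 0 < k) (p_prime : prime p) (kp : k.+2 <= p).

(* As p is an odd prime, r_p is either at most k/2 (when p < 2k) or p - 1. *)
Lemma r_p_cases :
  (p < k.*2 /\ (r_p k p).*2 <= k) \/ (k.*2 < p /\ r_p k p = p.-1).
Proof.
rewrite /r_p; case: ltnP => [ltp2k | le2kp]; [left | right]; split => //.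
  by rewrite -{2}(odd_double_half k) leq_addl.
rewrite ltn_neqAle le2kp andbT; apply: contraTneq p_prime => e.
apply/negP => /primeP [_ /(_ 2)]; rewrite -e -mul2n dvdn_mulr // => /(_ isT).
by rewrite mul2n e; lia.
Qed.

Lemma notinA_digits a : ~~ inA k p a ->
  [/\ a %/ p <= r_p k p, a %% p + k < p & (a %/ p = r_p k p -> a %% p = 0)].
Proof.
have p_gt0 := prime_gt0 p_prime.
rewrite /inA negb_or -leqNgt => /andP [/hasPn noI le_a].
have ea := divn_eq a p; have lt_s := ltn_pmod a p_gt0.
move: (a %/ p) (a %% p) ea lt_s noI le_a => q s -> lt_s noI le_a.
have le_qr : q <= r_p k p by nia.
have qr_s : q = r_p k p -> s = 0 by move=> eqr; nia.
split=> //; rewrite ltnNge; apply/negP => le_ps.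
have lt_qr : q < r_p k p.
  by rewrite ltn_neqAle le_qr andbT; apply/eqP => /qr_s; lia.
have /negP[] : ~~ (q.+1 * p - k <= q * p + s <= q.+1 * p - 1).
  by apply: noI; rewrite mem_iota; lia.
by apply/andP; split; nia.
Qed.

(* The elementary inequality behind the p-adic estimate below;
   M stands for (a + R)/p and V for v_p(M!). *)
Lemma gap_arith q s M V R :
  q <= r_p k p -> s + k < p -> (q = r_p k p -> s = 0) ->
  M * p <= q * p + s + R -> q <= M -> p.-1 * V <= M -> (M < p -> V = 0) ->
  0 < R -> k * (M + V - q) < R.
Proof.
move=> le_qr lt_sk qr_s leM le_qM leV smallV R_gt0.
have [[ltp2k le_r] | [lt2kp er]] := r_p_cases.
  move: (r_p k p) le_r le_qr qr_s => r le_r le_qr qr_s.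
  by case: (ltnP M p) => [/smallV-> | le_pM]; nia.
rewrite er in le_qr qr_s.
by case: (ltnP M p) => [/smallV-> | le_pM]; nia.
Qed.

End ExceptionalSet.

Lemma logn_fact_gap k p a R : 0 < k -> prime p -> k.+2 <= p -> ~~ inA k p a ->
  0 < R -> k * (logn p (a + R)`! - logn p a`!) < R.
Proof.
move=> k_gt0 p_prime kp notA R_gt0.
have [le_qr lt_sk qr_s] := notinA_digits k_gt0 p_prime kp notA.
have lt_rp : r_p k p < p by case: (r_p_cases k_gt0 p_prime kp) => [[_ ?] | [_ ->]]; lia.
have -> : logn p a`! = a %/ p.
  by rewrite logn_fact_rec // logn_fact_small ?addn0 //; lia.
rewrite logn_fact_rec //; apply: (gap_arith k_gt0 p_prime kp le_qr lt_sk qr_s) => //.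
- by rewrite -divn_eq leq_divM.
- by rewrite leq_div2r ?leq_addr.
- exact: logn_fact_bound.
- exact: logn_fact_small.
Qed.

Lemma ffactD m i j : m ^_ (i + j) = m ^_ i * (m - i) ^_ j.
Proof.
rewrite !ffact_prod big_split_ord /=; congr (_ * _).
by apply: eq_bigr => l _; rewrite subnDA.
Qed.

Lemma prod_top_factors m k : k <= m -> \prod_(1 <= i < k.+1) (m - k + i) = m ^_ k.
Proof.
move=> le_km; rewrite ffact_prod big_nat_rev big_add1 /= big_mkord.
by apply: eq_bigr => i _; have := ltn_ord i; lia.
Qed.

Lemma logn_ffact p m j : prime p ->
  logn p ((m + j) ^_ j) = logn p (m + j)`! - logn p m`!.
Proof.
move=> p_prime; have := ffact_fact (leq_addl m j); rewrite addnK => <-.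
by rewrite lognM ?fact_gt0 ?ffact_gt0 ?leq_addl // addnK.
Qed.

Lemma last_argmax (disp : Order.disp_t) (T : orderType disp) (f : nat -> T)
    (P : pred nat) (K : nat) :
  (forall i, P i -> i < K) -> (exists i, P i) ->
  exists2 m, P m & (forall i, P i -> (f i <= f m)%O) /\
                   (forall i, P i -> m < i -> (f i < f m)%O).
Proof.
move=> PK [i0 Pi0].
pose Q m := P m && [forall j : 'I_K, P j ==> (f j <= f m)%O].
have exQ : exists m, Q m.
  have [m /= Pm maxm] := arg_maxP (fun j : 'I_K => f j)
    (Pi0 : (fun j : 'I_K => P j) (Ordinal (PK _ Pi0))).
  by exists m; rewrite /Q Pm; apply/forallP => j; apply/implyP => /maxm.
have boundQ m : Q m -> m <= K by case/andP => /PK /ltnW.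
have [m /andP [Pm /forallP maxm] lastm] := ex_maxnP exQ boundQ.
have le_fm i : P i -> (f i <= f m)%O.
  by move=> Pi; exact: implyP (maxm (Ordinal (PK i Pi))) Pi.
exists m => //; split=> // i Pi lt_mi; rewrite ltNge; apply/negP => le_mi.
suff /lastm : Q i by rewrite leqNgt lt_mi.
rewrite /Q Pi; apply/forallP => j; apply/implyP => Pj.
exact: le_trans (le_fm j Pj) le_mi.
Qed.

Local Open Scope ring_scope.

Section NewtonPolygon.

Variable p : nat.
Hypothesis p_prime : prime p.

Local Notation v x := (logn p (absz x%R)).

Lemma logn_addr_dominant (t u : int) (V : nat) : t != 0 -> v t = V ->
  ((p ^ V.+1)%:Z %| u)%Z -> t + u != 0 /\ v (t + u) = V.
Proof.
move=> t_neq0 vt dvd_u.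
have dvd_t : ((p ^ V)%:Z %| t)%Z by rewrite -vt; exact: pfactor_dvdnn.
have ndvd_t : ~~ ((p ^ V.+1)%:Z %| t)%Z.
  by rewrite dvdzE pfactor_dvdn // ?absz_gt0 // vt ltnn.
have dvd_tu : ((p ^ V)%:Z %| t + u)%Z.
  by rewrite rpredD // (dvdz_trans _ dvd_u) // dvdzE dvdn_exp2l.
have ndvd_tu : ~~ ((p ^ V.+1)%:Z %| t + u)%Z.
  by apply: contra ndvd_t => dvd_tu'; rewrite -(addrK u t) rpredB.
have tu_neq0 : t + u != 0 by apply: contraNneq ndvd_tu => ->; rewrite dvdz0.
split=> //; move: dvd_tu ndvd_tu; rewrite !dvdzE !pfactor_dvdn ?absz_gt0 //; lia.
Qed.

(* If p divides the coefficients of G * H up to degree m while p does not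
   divide H_m, then p divides G_0 (compare the first coefficient of H that
   is not divisible by p). *)
Lemma dvd_coef0_of_low_coefs (G H : {poly int}) (m : nat) :
  ~~ (p%:Z %| H`_m)%Z -> (forall j, (j <= m)%N -> (p%:Z %| (G * H)`_j)%Z) ->
  (p%:Z %| G`_0)%Z.
Proof.
move=> ndvd_Hm dvd_low; apply/negPn/negP => ndvd_G0.
have exH : exists j, ~~ (p%:Z %| H`_j)%Z by exists m.
have [h ndvd_Hh min_h] := ex_minnP exH.
have dvd_rest : (p%:Z %| \sum_(i < h) G`_(lift ord0 i) * H`_(h - lift ord0 i))%Z.
  apply: rpred_sum => i _; apply: dvdz_mull; apply/negPn/negP => /min_h.
  by rewrite lift0 /=; have := ltn_ord i; lia.
have := dvd_low h (min_h m ndvd_Hm); rewrite coefM big_ord_recl subn0.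
rewrite (rpredDr _ dvd_rest) dvdzE abszM Euclid_dvdM //.
by case/orP; [apply/negP: ndvd_G0 | apply/negP: ndvd_Hh].
Qed.

(* The weight of the i-th coefficient of P along slope lam: the height of the
   point (i, v_p(P_i)) above the line through the origin of slope -lam. *)
Definition weight (lam : rat) (P : {poly int}) (i : nat) : rat :=
  (v P`_i)%:R + lam * i%:R.

(* d is the right end of the part of the Newton polygon of P (for p) that
   supports the lines of slope -lam: the weight is minimal at d and strictly
   larger at every later nonzero coefficient. *)
Definition right_vertex (lam : rat) (P : {poly int}) (d : nat) : Prop :=
  [/\ P`_d != 0,
      forall i, P`_i != 0 -> weight lam P d <= weight lam P i &
      forall i, P`_i != 0 -> (d < i)%N -> weight lam P d < weight lam P i].

Lemma coef_neq0_lt_size (P : {poly int}) i : P`_i != 0 -> (i < size P)%N.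
Proof. by rewrite ltnNge; apply: contra => /(nth_default 0) ->. Qed.

Lemma exists_right_vertex lam (P : {poly int}) : P != 0 ->
  exists d, right_vertex lam P d.
Proof.
move=> P_neq0.
have [|d Pd [min_d last_d]] := @last_argmax _ _ (fun i => - weight lam P i)
  (fun i => P`_i != 0) (size P) (@coef_neq0_lt_size P).
  by exists (size P).-1; rewrite -lead_coefE lead_coef_eq0.
exists d; split=> // i Pi; first by rewrite -lerN2 min_d.
by move=> lt_di; rewrite -ltrN2 last_d.
Qed.

(* The first edge of the Newton polygon of G, when p | G_0 but p does not
   divide all coefficients: it joins (0, v_p(G_0)) to some (d, v_p(G_d)),
   d > 0, and its slope -lam satisfies lam * k >= 1 whenever deg G <= k. *)
Lemma first_edge (k : nat) (G : {poly int}) : (size G <= k.+1)%N ->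
  G`_0 != 0 -> (p%:Z %| G`_0)%Z -> (exists i, ~~ (p%:Z %| G`_i)%Z) ->
  exists d (lam : rat), [/\ (0 < d)%N, right_vertex lam G d,
    weight lam G d = (v G`_0)%:R & 1 <= lam * k%:R].
Proof.
move=> size_G G0_neq0 dvd_G0 [i0 ndvd_Gi0].
have Gi0_neq0 : G`_i0 != 0 by apply: contraNneq ndvd_Gi0 => ->; rewrite dvdz0.
have i0_gt0 : (0 < i0)%N by case: i0 ndvd_Gi0 {Gi0_neq0} => //; rewrite dvd_G0.
pose slope i : rat := ((v G`_0)%:R - (v G`_i)%:R) / i%:R.
have [|d /andP [d_gt0 Gd_neq0] [max_d last_d]] := @last_argmax _ _ slope
    (fun i => (0 < i)%N && (G`_i != 0)) (size G)
    (fun i => fun Pi => coef_neq0_lt_size (proj2 (andP Pi))).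
  by exists i0; rewrite i0_gt0.
pose lam := slope d.
have slope_le i : (0 < i)%N -> slope i <= lam -> (v G`_0)%:R <= weight lam G i.
  by move=> i_gt0; rewrite /slope ler_pdivrMr ?ltr0n // /weight; lra.
have slope_lt i : (0 < i)%N -> slope i < lam -> (v G`_0)%:R < weight lam G i.
  by move=> i_gt0; rewrite /slope ltr_pdivrMr ?ltr0n // /weight; lra.
have on_line : weight lam G d = (v G`_0)%:R.
  rewrite /weight /lam /slope divfK ?pnatr_eq0 -?lt0n //; lra.
exists d, lam; split=> //; last first.
  have vGi0 : v G`_i0 = 0%N by rewrite logn_coprime // prime_coprime.
  have vG0 : (0 < v G`_0)%N.
    by rewrite logn_gt0 mem_primes p_prime absz_gt0 G0_neq0.
  have ge_i0 : (v G`_0)%:R <= weight lam G i0.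
    by apply: slope_le => //; rewrite max_d // i0_gt0.
  have lam_i0 : 1 <= lam * i0%:R.
    by move: ge_i0; rewrite /weight vGi0 add0r; apply: le_trans; rewrite ler1n vG0.
  have lam_ge0 : 0 <= lam.
    by rewrite -(@pmulr_lge0 _ i0%:R) ?ltr0n //; apply: le_trans lam_i0.
  apply: le_trans lam_i0 _; rewrite ler_wpM2l // ler_nat -ltnS.
  exact: leq_trans (coef_neq0_lt_size Gi0_neq0) size_G.
split=> // [i Gi | i Gi lt_di]; rewrite on_line.
  case: (posnP i) => [-> | i_gt0]; first by rewrite /weight mulr0 addr0.
  by apply: slope_le; rewrite // max_d ?i_gt0.
have i_gt0 := leq_ltn_trans (leq0n d) lt_di.
by apply: slope_lt; rewrite // last_d ?i_gt0.
Qed.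

(* Product of two right vertices of the same slope: the coefficient of G * H
   of index d + L has exactly the valuation v_p(G_d) + v_p(H_L), because
   every other term of the convolution has strictly larger weight. *)
Lemma right_vertex_coefM lam (G H : {poly int}) d L :
  right_vertex lam G d -> right_vertex lam H L ->
  (G * H)`_(d + L) != 0 /\ v (G * H)`_(d + L) = (v G`_d + v H`_L)%N.
Proof.
move=> [Gd_neq0 min_d last_d] [HL_neq0 min_L last_L].
set R := (d + L)%N; have lt_dR : (d < R.+1)%N by rewrite ltnS leq_addr.
rewrite coefM (bigD1 (Ordinal lt_dR)) //= {1}/R addKn.
apply: logn_addr_dominant; first exact: mulf_neq0.
  by rewrite abszM lognM ?absz_gt0.
apply: rpred_sum => i ne_id.
have {}ne_id : nat_of_ord i != d by apply: contraNneq ne_id => e; apply/eqP/val_inj.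
have [-> | Gi_neq0] := eqVneq G`_i 0; first by rewrite mul0r dvdz0.
have [-> | Hj_neq0] := eqVneq H`_(R - i) 0; first by rewrite mulr0 dvdz0.
suff lt_v : (v G`_d + v H`_L < v G`_i + v H`_(R - i))%N.
  rewrite dvdzE abszM (@dvdn_trans (p ^ (v G`_i + v H`_(R - i)))) //.
    by rewrite dvdn_exp2l ?prime_gt0.
  by rewrite expnD dvdn_mul // pfactor_dvdnn.
have le_iR : (i <= R)%N by rewrite -ltnS.
have gap : weight lam G i + weight lam H (R - i) - (weight lam G d + weight lam H L)
    = (v G`_i + v H`_(R - i))%:R - (v G`_d + v H`_L)%:R :> rat.
  by rewrite /weight !natrD natrB // /R natrD; ring.
rewrite -(ltr_nat rat); have [lt_id | lt_di] : (i < d)%N \/ (d < i)%N.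
- by move: ne_id; rewrite neq_ltn => /orP [] ?; [left | right].
- have lt_L : (L < R - i)%N by rewrite /R; move: (nat_of_ord i) lt_id; lia.
  by have := min_d i Gi_neq0; have := last_L _ Hj_neq0 lt_L; lra.
- by have := last_d i Gi_neq0 lt_di; have := min_L _ Hj_neq0; lra.
Qed.

Lemma newton_slope (k : nat) (G H : {poly int}) :
  (size G <= k.+1)%N -> (G * H)`_0 != 0 -> (p%:Z %| G`_0)%Z ->
  (exists i, ~~ (p%:Z %| G`_i)%Z) ->
  exists R, [/\ (0 < R)%N, (G * H)`_R != 0 &
                (k * v (G * H)`_R + R <= k * v (G * H)`_0)%N].
Proof.
move=> size_G; rewrite coef0M mulf_eq0 negb_or => /andP [G0_neq0 H0_neq0] dvd_G0 ndvd.
have [d [lam [d_gt0 vertG on_line lam_k]]] := first_edge size_G G0_neq0 dvd_G0 ndvd.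
have [|L vertH] := @exists_right_vertex lam H.
  by apply: contraNneq H0_neq0 => ->; rewrite coef0.
have [FR_neq0 vFR] := right_vertex_coefM vertG vertH.
exists (d + L)%N; split=> //; first by rewrite addn_gt0 d_gt0.
have below : (v (G * H)`_(d + L))%:R + lam * (d + L)%:R <= (v (G * H)`_0)%:R :> rat.
  have [_ min_L _] := vertH; have := min_L 0%N H0_neq0.
  move: on_line; rewrite vFR coef0M abszM lognM ?absz_gt0 // /weight !natrD mulr0.
  lra.
have le_R : (d + L)%:R <= k%:R * (lam * (d + L)%:R) :> rat.
  by rewrite mulrA [k%:R * lam]mulrC ler_peMl.
rewrite -coef0M -(ler_nat rat) [X in X <= _]natrD !natrM.
by have := ler_wpM2l (ler0n rat k) below; rewrite mulrDr; lra.
Qed.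

End NewtonPolygon.

Local Notation pZtoQ := (map_poly (intr : int -> rat)).

Section ClearDenominators.

Variables (n a : nat) (c : nat -> int).

(* (n + a)! f_{n,a}, an integer polynomial: its j-th coefficient is
   c_j (n+a)!/(j+a)! = c_j (n+a)(n+a-1)...(j+a+1). *)
Definition fnaZ : {poly int} := \poly_(j < n.+1) (c j * ((n + a) ^_ (n - j))%:Z).

Lemma coef_fnaZ j : (j <= n)%N -> fnaZ`_j = c j * ((n + a) ^_ (n - j))%:Z.
Proof. by rewrite coef_poly ltnS => ->. Qed.

Lemma fnaZ_fna : pZtoQ fnaZ = ((n + a)`!)%:R *: fna n a c.
Proof.
rewrite /fna -(poly_def n.+1 (fun j => (c j)%:~R / ((j + a)`!)%:R)).
apply/polyP => j.
rewrite coef_map coefZ !coef_poly /=.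
case: ifP => [lt_jn | _]; last by rewrite mulr0.
have le_nj : (n - j <= n + a)%N by lia.
have := ffact_fact le_nj; rewrite (_ : n + a - (n - j) = j + a)%N; last by lia.
move=> <-; rewrite natrM intrM -pmulrn; field.
by rewrite pnatr_eq0 -lt0n fact_gt0.
Qed.

Lemma size_fnaZ : c n != 0 -> size fnaZ = n.+1 /\ lead_coef fnaZ = c n.
Proof.
move=> cn_neq0; have size_eq : size fnaZ = n.+1.
  by rewrite size_poly_eq // subnn mulr1.
by rewrite lead_coefE size_eq coef_fnaZ // subnn mulr1.
Qed.

(* A factor of degree k of f_{n,a} over Q yields a factorization of fnaZ in
   Z[x] with a factor of degree k (Gauss's lemma). *)
Lemma fnaZ_factor k : (exists g : {poly rat}, size g = k.+1 /\ g %| fna n a c) ->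
  exists G H : {poly int}, size G = k.+1 /\ fnaZ = G * H.
Proof.
move=> [g [size_g dvd_g]].
have : g %| pZtoQ fnaZ by rewrite fnaZ_fna dvdpZr // pnatr_eq0 -lt0n fact_gt0.
case/dvdpP_rat_int => G [s s_neq0 eg] [H eF]; exists G, H; split=> //.
by rewrite -size_g eg size_scale // size_rat_int_poly.
Qed.

Variables (k p : nat).
Hypotheses (p_prime : prime p) (pC : condC n a k c p).

Local Notation v x := (logn p (absz x%R)).

Lemma condC_coprime : ~~ (p%:Z %| c 0%N)%Z /\ ~~ (p%:Z %| c n)%Z.
Proof.
by case/and3P: pC => _ _; rewrite !dvdzE abszM Euclid_dvdM // negb_or => /andP.
Qed.

(* p divides the top k factors of (n+a)!, hence the coefficients of fnaZ of
   degree at most n - k. *)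
Lemma dvd_low_coef_fnaZ j : (k <= n)%N -> (j <= n - k)%N -> (p%:Z %| fnaZ`_j)%Z.
Proof.
move=> le_kn le_j; case/and3P: pC => _ dvd_top _.
rewrite coef_fnaZ; last by lia.
rewrite dvdz_mull // dvdzE /= (_ : n - j = k + (n - j - k))%N; last by lia.
by rewrite ffactD dvdn_mulr // addnC -prod_top_factors // addnC; lia.
Qed.

(* v_p(F_0) <= v_p(F_R) + v_p((a+R)^_R): indeed F_0 = a_0 (n+a)^_n with
   p not dividing a_0, F_R = a_R (n+a)^_(n-R), and
   (n+a)^_n = (n+a)^_(n-R) (a+R)^_R. *)
Lemma logn_coef_fnaZ R : (R <= n)%N -> fnaZ`_R != 0 ->
  (v fnaZ`_0 <= v fnaZ`_R + logn p ((a + R) ^_ R))%N.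
Proof.
move=> le_Rn FR_neq0; have [ndvd_c0 _] := condC_coprime.
have cR_neq0 : c R != 0.
  by apply: contraNneq FR_neq0; rewrite coef_fnaZ // => ->; rewrite mul0r.
have top : ((n + a) ^_ n = (n + a) ^_ (n - R) * (a + R) ^_ R)%N.
  by rewrite -{2}(subnK le_Rn) ffactD; congr (_ * _ ^_ _); lia.
have c0_neq0 : c 0%N != 0 by apply: contraNneq ndvd_c0 => ->; rewrite dvdz0.
rewrite !coef_fnaZ // subn0 !abszM /= !lognM ?absz_gt0 ?ffact_gt0 //; try lia.
by rewrite logn_coprime ?prime_coprime // top lognM ?ffact_gt0; lia.
Qed.

End ClearDenominators.

Lemma factor_forces_valuation n a k (c : nat -> int) p : prime p ->
  condC n a k c p -> (exists g : {poly rat}, size g = k.+1 /\ g %| fna n a c) ->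
  exists2 R, (0 < R)%N & (R <= k * logn p ((a + R) ^_ R))%N.
Proof.
move=> p_prime pC /fnaZ_factor [G [H [size_G eF]]].
have [ndvd_c0 ndvd_cn] := condC_coprime p_prime pC.
have cn_neq0 : c n != 0 by apply: contraNneq ndvd_cn => ->; rewrite dvdz0.
have c0_neq0 : c 0%N != 0 by apply: contraNneq ndvd_c0 => ->; rewrite dvdz0.
have [size_F lead_F] := size_fnaZ a cn_neq0.
have : G * H != 0 by rewrite -eF -size_poly_eq0 size_F.
rewrite mulf_eq0 negb_or => /andP [G_neq0 H_neq0].
have [le_kn size_H] : (k <= n)%N /\ size H = (n - k).+1.
  have : (0 < size H)%N by rewrite size_poly_gt0.
  move: size_F; rewrite eF size_mul // size_G; move: (size H) => s; lia.
have [ndvd_Gk ndvd_Hm] : ~~ (p%:Z %| G`_k)%Z /\ ~~ (p%:Z %| H`_(n - k))%Z.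
  move: ndvd_cn; rewrite -lead_F eF lead_coefM !lead_coefE size_G size_H.
  by rewrite !dvdzE abszM Euclid_dvdM // negb_or => /andP.
have dvd_G0 : (p%:Z %| G`_0)%Z.
  apply: (dvd_coef0_of_low_coefs p_prime ndvd_Hm) => j le_j.
  by rewrite -eF (dvd_low_coef_fnaZ p_prime pC le_kn le_j).
have F0_neq0 : (G * H)`_0 != 0.
  rewrite -eF coef_fnaZ // subn0 mulf_neq0 //.
  by rewrite -[0]/(0%:Z) eqz_nat -lt0n ffact_gt0 leq_addr.
have [R [R_gt0 FR_neq0 slope]] :=
  newton_slope p_prime (eq_leq size_G) F0_neq0 dvd_G0 (ex_intro _ k ndvd_Gk).
rewrite -eF in FR_neq0 slope.
have le_Rn : (R <= n)%N by rewrite -ltnS -size_F coef_neq0_lt_size.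
exists R => //; have drop := logn_coef_fnaZ p_prime pC le_Rn FR_neq0.
rewrite -(leq_add2l (k * logn p `|(fnaZ n a c)`_R|)) -mulnDr.
exact: leq_trans slope (leq_mul (leqnn k) drop).
Qed.

Local Close Scope ring_scope.

Lemma no_factor_notinA n a k (c : nat -> int) p :
  0 < k -> k.+2 <= p -> condC n a k c p -> ~~ inA k p a ->
  no_factor_of_degree k (fna n a c).
Proof.
move=> k_gt0 kp pC notA factor.
have p_prime : prime p by case/and3P: pC.
have [R R_gt0] := factor_forces_valuation p_prime pC factor.
have := logn_fact_gap k_gt0 p_prime kp notA R_gt0.
by rewrite -logn_ffact // addnC; lia.
Qed.

Lemma notinA_large_prime k p a : 0 < k -> 1 < p -> a + k < p -> ~~ inA k p a.
Proof.
move=> k_gt0 p_gt1 lt_akp; rewrite /inA negb_or -leqNgt; apply/andP; split.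
  by apply/hasPn => i; rewrite mem_iota => /andP [i_gt0 _]; apply/negP; nia.
have r_gt0 : 0 < r_p k p.
  rewrite /r_p; case: ifP => [lt_p2k | _]; last by lia.
  by rewrite -(odd_double_half k) in lt_p2k *; case: (odd k) lt_p2k => /=; lia.
by nia.
Qed.

Theorem corollary2p2 (a n k : nat) (c : nat -> int) :
  0 < a -> 1 <= k -> k.*2 <= n ->
  (* (i) *)
  ((exists p, a + k < p /\ condC n a k c p) ->
     no_factor_of_degree k (fna n a c)) /\
  (* (ii) *)
  (forall p, k.+2 <= p -> condC n a k c p -> ~~ inA k p a ->
     no_factor_of_degree k (fna n a c)) /\
  (* (iii) *)
  (forall Ps Qs : seq nat,
     sorted (fun x y => y < x) Ps ->
     all (fun q => (k.+2 <= q) && condC n a k c q) Ps ->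
     {subset Qs <= Ps} ->
     ~~ inB k Qs a ->
     no_factor_of_degree k (fna n a c)).
Proof.
move=> a_gt0 k_gt0 _; split; [|split].
- move=> [p [lt_akp pC]].
  apply: (no_factor_notinA k_gt0 _ pC); first by lia.
  by apply: notinA_large_prime; lia.
- by move=> p; apply: no_factor_notinA.
- move=> Ps Qs _ /allP PsC QsPs /allPn [q /QsPs /PsC /andP [kq qC] notA].
  exact: no_factor_notinA k_gt0 kq qC notA.
Qed.
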